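(* Let $U=B(c,R)\cap\mathbb{Z}[\mathrm{i}]$ for some $c\in\mathbb{C}$, $R>0$, let $p,q\in\mathbb{Z}[\mathrm{i}]$ be $\mathbb{Z}$-linearly independent, and suppose the configuration $(a_z)_{z\in\mathbb{Z}[\mathrm{i}]}$ has step-period $(p,q)$ in $U$. Then $(a_z)$ has period $(p,q)$ in $U^{\circ r}$, where $r=|p|+|q|$.
   Context: For $\mathbb{Z}$-linearly independent $p_1,p_2\in\mathbb{Z}[\mathrm{i}]$, $\langle p_1,p_2\rangle=\{m_1p_1+m_2p_2:m_i\in\mathbb{Z}\}$. For $U\subseteq\mathbb{Z}[\mathrm{i}]$: $(a_z)$ has period $(p_1,p_2)$ in $U$ if for all $z_1,z_2\in U$ with $z_1-z_2\in\langle p_1,p_2\rangle$ we have $a_{z_1}=a_{z_2}$; $(a_z)$ has step-period $(p_1,p_2)$ in $U$ if whenever $z\in U$ and $z+p_i\in U$ for some $i\in\{1,2\}$, then $a_z=a_{z+p_i}$. For $V\subseteq\mathbb{Z}[\mathrm{i}]$ and $r>0$, $V^{\circ r}=\{z\in V:B(z,r)\cap\mathbb{Z}[\mathrm{i}]\subseteq V\}$, where $B(z,r)$ is the ball of centre $z$ and radius $r$ in $\mathbb{C}$. *)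

(* Gaussian integers Z[i] are pairs (x,y) : Z*Z, embedded in
   Coquelicot's complex numbers C; distances via Cmod. *)
From Stdlib Require Import Reals ZArith.
From Coquelicot Require Import Coquelicot.
Open Scope R_scope.

Definition gauss := (Z * Z)%type.

Definition gadd (z w : gauss) : gauss := ((fst z + fst w)%Z, (snd z + snd w)%Z).
Definition gsub (z w : gauss) : gauss := ((fst z - fst w)%Z, (snd z - snd w)%Z).
Definition gzscal (m : Z) (z : gauss) : gauss := ((m * fst z)%Z, (m * snd z)%Z).

Definition toC (z : gauss) : C := (IZR (fst z), IZR (snd z)).

Definition Zlin_indep (p1 p2 : gauss) : Prop :=
  forall m1 m2 : Z, gadd (gzscal m1 p1) (gzscal m2 p2) = (0%Z, 0%Z) ->
    m1 = 0%Z /\ m2 = 0%Z.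

Definition in_lattice (p1 p2 w : gauss) : Prop :=
  exists m1 m2 : Z, w = gadd (gzscal m1 p1) (gzscal m2 p2).

Definition gball (c : C) (r : R) (z : gauss) : Prop := Cmod (toC z - c) < r.

Definition has_period {A : Type} (a : gauss -> A) (p1 p2 : gauss)
  (U : gauss -> Prop) : Prop :=
  forall z1 z2, U z1 -> U z2 -> in_lattice p1 p2 (gsub z1 z2) -> a z1 = a z2.

Definition has_step_period {A : Type} (a : gauss -> A) (p1 p2 : gauss)
  (U : gauss -> Prop) : Prop :=
  forall z, U z ->
    (U (gadd z p1) -> a z = a (gadd z p1)) /\
    (U (gadd z p2) -> a z = a (gadd z p2)).

Definition interior_r (V : gauss -> Prop) (r : R) (z : gauss) : Prop :=
  V z /\ forall w, gball (toC z) r w -> V w.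

(* Write z1 - z2 = n1 P + n2 Q with n1, n2 >= 0, P = +-p and Q = +-q.  The
   staircase z2 + floor(k n1 / N) P + (k - floor(k n1 / N)) Q, k = 0 .. N := n1 + n2,
   walks from z2 to z1 by single steps P or Q, and each of its points is
   z2 + t (z1 - z2) + s (Q - P) with t, s in [0, 1], i.e. it lies in the
   parallelogram with corners z2, z1, z2 + (Q - P), z1 + (Q - P).  As p and q are
   not parallel, |Q - P| < |p| + |q| = r, so for z1, z2 in U^{o r} all four corners
   lie in the ball B(c, R); by convexity so does the whole staircase, and the
   step-period carries a_{z2} along it to a_{z1}. *)

From Stdlib Require Import Reals ZArith Lia Lra Psatz.
From Coquelicot Require Import Coquelicot.
Open Scope R_scope.

Lemma Rdiv_unit_interval (x y : R) : 0 < y -> 0 <= x <= y -> 0 <= x / y <= 1.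
Proof.
  intros Hy Hx. assert (Hinv := Rinv_0_lt_compat y Hy). unfold Rdiv.
  split; [nra|]. replace 1 with (y * / y) by (field; lra). nra.
Qed.

Lemma Cmod_convex_lt (c x y : C) (R t : R) :
  Cmod (x - c) < R -> Cmod (y - c) < R -> 0 <= t <= 1 ->
  Cmod ((1 - t) * x + t * y - c) < R.
Proof.
  intros Hx Hy Ht.
  replace ((1 - t) * x + t * y - c)%C with (RtoC (1 - t) * (x - c) + RtoC t * (y - c))%C
    by (rewrite RtoC_minus; field).
  eapply Rle_lt_trans; [apply Cmod_triangle|].
  rewrite !Cmod_mult, !Cmod_R, !Rabs_pos_eq by lra.
  destruct (Req_dec t 0) as [->|]; nra.
Qed.

Lemma Cmod_parallelogram_lt (c w1 w2 d : C) (R t s : R) :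
  Cmod (w1 - c) < R -> Cmod (w2 - c) < R ->
  Cmod (w1 + d - c) < R -> Cmod (w2 + d - c) < R ->
  0 <= t <= 1 -> 0 <= s <= 1 ->
  Cmod (w2 + t * (w1 - w2) + s * d - c) < R.
Proof.
  intros H1 H2 H1d H2d Ht Hs.
  replace (w2 + t * (w1 - w2) + s * d)%C with
    ((1 - t) * ((1 - s) * w2 + s * (w2 + d)) + t * ((1 - s) * w1 + s * (w1 + d)))%C
    by field.
  auto using Cmod_convex_lt.
Qed.

Lemma Cmod_sub_lt_add (u v : C) :
  Re u * Im v - Im u * Re v <> 0 -> Cmod (v - u) < Cmod u + Cmod v.
Proof.
  intros Hdet.
  assert (Hu := Cmod2_alt u); assert (Hv := Cmod2_alt v); assert (Hvu := Cmod2_alt (v - u)).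
  assert (Hu0 := Cmod_ge_0 u); assert (Hv0 := Cmod_ge_0 v).
  set (a := Cmod u) in *; set (b := Cmod v) in *; set (e := Cmod (v - u)) in *.
  destruct u as [u1 u2], v as [v1 v2]; cbn [Re Im fst snd Cminus Cplus Copp] in *.
  apply Rnot_le_lt; intros Hle.
  assert (Hab : a * b <= - (u1 * v1 + u2 * v2)) by nra.
  assert (Hcs : (a * b) ^ 2 = (u1 * v1 + u2 * v2) ^ 2 + (u1 * v2 - u2 * v1) ^ 2)
    by (rewrite Rpow_mult_distr, Hu, Hv; ring).
  assert (0 < (u1 * v2 - u2 * v1) ^ 2) by (apply pow2_gt_0; auto).
  assert (0 <= a * b) by nra.
  nra.
Qed.

Definition gopp (z : gauss) : gauss := ((- fst z)%Z, (- snd z)%Z).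

Definition gdet (z w : gauss) : Z := (fst z * snd w - snd z * fst w)%Z.

Lemma toC_add (z w : gauss) : toC (gadd z w) = (toC z + toC w)%C.
Proof. unfold toC, gadd; cbn. now rewrite !plus_IZR. Qed.

Lemma toC_sub (z w : gauss) : toC (gsub z w) = (toC z - toC w)%C.
Proof. unfold toC, gsub, Cminus, Cplus, Copp; cbn. now rewrite !minus_IZR. Qed.

Lemma toC_zscal (m : Z) (z : gauss) : toC (gzscal m z) = (IZR m * toC z)%C.
Proof. unfold toC, gzscal, Cmult; cbn. rewrite !mult_IZR. f_equal; ring. Qed.

Lemma Cmod_toC_opp (z : gauss) : Cmod (toC (gopp z)) = Cmod (toC z).
Proof.
  rewrite <- (Cmod_opp (toC z)). f_equal.
  unfold toC, gopp, Copp; cbn. now rewrite !opp_IZR.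
Qed.

Lemma Cmod_toC_sub_lt_add (z w : gauss) :
  gdet z w <> 0%Z -> Cmod (toC (gsub w z)) < Cmod (toC z) + Cmod (toC w).
Proof.
  intros Hdet. rewrite toC_sub. apply Cmod_sub_lt_add.
  unfold gdet, toC in *; cbn. rewrite <- !mult_IZR, <- minus_IZR. now apply not_0_IZR.
Qed.

Lemma Zlin_indep_gdet (p q : gauss) : Zlin_indep p q -> gdet p q <> 0%Z.
Proof.
  destruct p as [p1 p2], q as [q1 q2]; unfold gdet, Zlin_indep, gadd, gzscal; cbn.
  intros Hind Hdet.
  assert (H2 := Hind q2 (- p2)%Z ltac:(f_equal; lia)).
  assert (H1 := Hind q1 (- p1)%Z ltac:(f_equal; lia)).
  assert (Hp := Hind 1%Z 0%Z ltac:(f_equal; lia)).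
  lia.
Qed.

Lemma Cmod_toC_sub_signs_lt (p q P Q : gauss) :
  gdet p q <> 0%Z -> (P = p \/ P = gopp p) -> (Q = q \/ Q = gopp q) ->
  Cmod (toC (gsub Q P)) < Cmod (toC p) + Cmod (toC q).
Proof.
  intros Hdet HP HQ.
  assert (HmodP : Cmod (toC P) = Cmod (toC p))
    by (destruct HP as [-> | ->]; auto using Cmod_toC_opp).
  assert (HmodQ : Cmod (toC Q) = Cmod (toC q))
    by (destruct HQ as [-> | ->]; auto using Cmod_toC_opp).
  rewrite <- HmodP, <- HmodQ. apply Cmod_toC_sub_lt_add.
  destruct HP as [-> | ->], HQ as [-> | ->];
    destruct p, q; unfold gdet, gopp in *; cbn in *; lia.
Qed.

Lemma gzscal_abs_sign (m : Z) (p : gauss) :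
  exists P, (P = p \/ P = gopp p) /\ gzscal m p = gzscal (Z.abs m) P.
Proof.
  destruct (Z_lt_le_dec m 0) as [Hm|Hm]; [exists (gopp p) | exists p];
    split; auto; destruct p; unfold gzscal, gopp; cbn; f_equal; lia.
Qed.

Lemma interior_r_shift (V : gauss -> Prop) (r : R) (z d : gauss) :
  interior_r V r z -> Cmod (toC d) < r -> V (gadd z d).
Proof.
  intros [_ Hball] Hd. apply Hball. unfold gball.
  rewrite toC_add. now replace (toC z + toC d - toC z)%C with (toC d) by ring.
Qed.

Definition step_invariant {A : Type} (a : gauss -> A) (U : gauss -> Prop) (d : gauss) : Prop :=
  forall z, U z -> U (gadd z d) -> a z = a (gadd z d).

Lemma has_step_period_invariant {A : Type} (a : gauss -> A) (p q : gauss) (U : gauss -> Prop) :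
  has_step_period a p q U -> step_invariant a U p /\ step_invariant a U q.
Proof. intros H; split; intros z Hz; [exact (proj1 (H z Hz)) | exact (proj2 (H z Hz))]. Qed.

Lemma step_invariant_opp {A : Type} (a : gauss -> A) (U : gauss -> Prop) (d : gauss) :
  step_invariant a U d -> step_invariant a U (gopp d).
Proof.
  intros H z Hz Hzd.
  assert (Hback : gadd (gadd z (gopp d)) d = z).
  { destruct z, d; unfold gadd, gopp; cbn; f_equal; lia. }
  rewrite <- Hback at 1. symmetry. apply H; [exact Hzd | now rewrite Hback].
Qed.

Lemma step_invariant_path {A : Type} (a : gauss -> A) (U : gauss -> Prop) (P Q : gauss)
    (X : Z -> gauss) (N : Z) :
  step_invariant a U P -> step_invariant a U Q ->
  (forall k, (0 <= k <= N)%Z -> U (X k)) ->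
  (forall k, (0 <= k < N)%Z -> X (k + 1)%Z = gadd (X k) P \/ X (k + 1)%Z = gadd (X k) Q) ->
  (0 <= N)%Z -> a (X 0%Z) = a (X N).
Proof.
  intros HP HQ HU Hstep HN.
  enough (Hk : forall k, (0 <= k)%Z -> (k <= N)%Z -> a (X 0%Z) = a (X k)) by auto with zarith.
  apply (natlike_ind (fun k => (k <= N)%Z -> a (X 0%Z) = a (X k))); [reflexivity|].
  intros k Hk IH HkN. rewrite <- Z.add_1_r in *. rewrite IH by lia.
  destruct (Hstep k ltac:(lia)) as [E|E]; rewrite E;
    [apply HP | apply HQ]; rewrite <- ?E; apply HU; lia.
Qed.

Definition staircase (z P Q : gauss) (n1 N k : Z) : gauss :=
  gadd z (gadd (gzscal (k * n1 / N) P) (gzscal (k - k * n1 / N) Q)).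

Lemma staircase_0 (z P Q : gauss) (n1 N : Z) : staircase z P Q n1 N 0 = z.
Proof. destruct z, P, Q; unfold staircase, gadd, gzscal; cbn; f_equal; lia. Qed.

Lemma staircase_end (z P Q : gauss) (n1 n2 : Z) :
  (0 <= n1)%Z -> (0 <= n2)%Z ->
  staircase z P Q n1 (n1 + n2) (n1 + n2) = gadd z (gadd (gzscal n1 P) (gzscal n2 Q)).
Proof.
  intros H1 H2. unfold staircase.
  destruct (Z.eq_dec (n1 + n2) 0) as [H0|H0].
  - assert (n1 = 0%Z) as -> by lia; assert (n2 = 0%Z) as -> by lia. reflexivity.
  - rewrite Z.mul_comm, Z.div_mul by exact H0. do 3 f_equal. lia.
Qed.

Lemma staircase_step (z P Q : gauss) (n1 N k : Z) :
  (0 < N)%Z -> (0 <= n1 <= N)%Z -> (0 <= k)%Z ->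
  staircase z P Q n1 N (k + 1) = gadd (staircase z P Q n1 N k) P \/
  staircase z P Q n1 N (k + 1) = gadd (staircase z P Q n1 N k) Q.
Proof.
  intros HN Hn1 Hk.
  assert (Hlo : (k * n1 / N <= (k + 1) * n1 / N)%Z) by (apply Z.div_le_mono; nia).
  assert (Hhi : ((k + 1) * n1 / N <= k * n1 / N + 1)%Z).
  { rewrite <- (Z.div_add (k * n1) 1 N) by lia. apply Z.div_le_mono; nia. }
  unfold staircase.
  destruct (Z.eq_dec ((k + 1) * n1 / N) (k * n1 / N + 1)) as [E|E]; [left|right];
    [rewrite E | replace ((k + 1) * n1 / N)%Z with (k * n1 / N)%Z by lia];
    destruct z, P, Q; unfold gadd, gzscal; cbn; f_equal; ring.
Qed.

Lemma staircase_in_ball (c : C) (R : R) (z P Q : gauss) (n1 n2 k : Z) :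
  gball c R z -> gball c R (gadd z (gadd (gzscal n1 P) (gzscal n2 Q))) ->
  gball c R (gadd z (gsub Q P)) ->
  gball c R (gadd (gadd z (gadd (gzscal n1 P) (gzscal n2 Q))) (gsub Q P)) ->
  (0 <= n1)%Z -> (0 <= n2)%Z -> (0 < n1 + n2)%Z -> (0 <= k <= n1 + n2)%Z ->
  gball c R (staircase z P Q n1 (n1 + n2) k).
Proof.
  unfold gball; rewrite !toC_add, !toC_zscal, !toC_sub.
  intros Hz Hz' Hzd Hz'd Hn1 Hn2 HN Hk.
  set (N := (n1 + n2)%Z) in *.
  set (a := (k * n1 / N)%Z).
  assert (Ha : (N * a <= k * n1 < N * a + N)%Z).
  { assert (Hdm := Z.div_mod (k * n1) N ltac:(lia)).
    assert (Hmod := Z.mod_pos_bound (k * n1) N HN). fold a in Hdm. lia. }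
  assert (HNR : 0 < IZR N) by (apply IZR_lt; lia).
  assert (HaR : IZR N * IZR a <= IZR k * IZR n1 < IZR N * IZR a + IZR N).
  { rewrite <- !mult_IZR, <- plus_IZR. split; apply IZR_le || apply IZR_lt; lia. }
  (* [s] is the fractional part of k n1 / N. *)
  set (t := IZR k / IZR N). set (s := (IZR k * IZR n1 - IZR N * IZR a) / IZR N).
  assert (Ht : 0 <= t <= 1).
  { apply Rdiv_unit_interval; [lra | split; apply IZR_le; lia]. }
  assert (Hs : 0 <= s <= 1) by (apply Rdiv_unit_interval; lra).
  replace (toC (staircase z P Q n1 N k))
    with (toC z + t * (toC z + (IZR n1 * toC P + IZR n2 * toC Q) - toC z)
          + s * (toC Q - toC P))%C.
  { apply Cmod_parallelogram_lt; auto. }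
  assert (HNC : RtoC (IZR N) <> 0%C) by (intros H0; injection H0; lra).
  unfold staircase, t, s; fold a.
  rewrite !toC_add, !toC_zscal, !minus_IZR, !RtoC_div, !RtoC_minus, !RtoC_mult by lra.
  unfold N in *; rewrite plus_IZR, RtoC_plus in *.
  field; exact HNC.
Qed.

Lemma lattice_cone_invariant {A : Type} (a : gauss -> A) (c : C) (R : R)
    (P Q z : gauss) (n1 n2 : Z) :
  step_invariant a (gball c R) P -> step_invariant a (gball c R) Q ->
  (0 <= n1)%Z -> (0 <= n2)%Z ->
  gball c R z -> gball c R (gadd z (gadd (gzscal n1 P) (gzscal n2 Q))) ->
  gball c R (gadd z (gsub Q P)) ->
  gball c R (gadd (gadd z (gadd (gzscal n1 P) (gzscal n2 Q))) (gsub Q P)) ->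
  a z = a (gadd z (gadd (gzscal n1 P) (gzscal n2 Q))).
Proof.
  intros HP HQ Hn1 Hn2 Hz Hz' Hzd Hz'd.
  destruct (Z.eq_dec (n1 + n2) 0) as [H0|H0].
  - assert (n1 = 0%Z) as -> by lia; assert (n2 = 0%Z) as -> by lia.
    f_equal; destruct z, P, Q; unfold gadd, gzscal; cbn; f_equal; lia.
  - rewrite <- (staircase_end z P Q n1 n2), <- (staircase_0 z P Q n1 (n1 + n2)) at 1 by auto.
    apply (step_invariant_path a (gball c R) P Q); [exact HP | exact HQ | | | lia].
    + intros k Hk. apply staircase_in_ball; auto; lia.
    + intros k Hk. apply staircase_step; lia.
Qed.

Theorem lemma4p4 (A : Type) (a : gauss -> A) (c : C) (R0 : R) (p q : gauss) :
  0 < R0 ->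
  Zlin_indep p q ->
  has_step_period a p q (gball c R0) ->
  has_period a p q (interior_r (gball c R0) (Cmod (toC p) + Cmod (toC q))).
Proof.
  intros _ Hind Hstep z1 z2 Hz1 Hz2 [m1 [m2 Hlat]].
  destruct (has_step_period_invariant a p q _ Hstep) as [Hp Hq].
  destruct (gzscal_abs_sign m1 p) as [P [HP HmP]].
  destruct (gzscal_abs_sign m2 q) as [Q [HQ HmQ]].
  assert (Hz1_eq : z1 = gadd z2 (gadd (gzscal (Z.abs m1) P) (gzscal (Z.abs m2) Q))).
  { rewrite <- HmP, <- HmQ, <- Hlat. destruct z1, z2; unfold gadd, gsub; cbn; f_equal; lia. }
  assert (Hshort := Cmod_toC_sub_signs_lt p q P Q (Zlin_indep_gdet p q Hind) HP HQ).
  subst z1. symmetry.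
  apply (lattice_cone_invariant a c R0).
  - destruct HP as [-> | ->]; auto using step_invariant_opp.
  - destruct HQ as [-> | ->]; auto using step_invariant_opp.
  - apply Z.abs_nonneg.
  - apply Z.abs_nonneg.
  - exact (proj1 Hz2).
  - exact (proj1 Hz1).
  - exact (interior_r_shift _ _ _ _ Hz2 Hshort).
  - exact (interior_r_shift _ _ _ _ Hz1 Hshort).
Qed.
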